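(* The function $s \mapsto s\,\dfrac{\theta_4'(s)}{\theta_4(s)}$ is strictly decreasing on $(0,\infty)$.
   Context: For $s>0$, $\theta_4(s) = \sum_{k\in\mathbb{Z}} (-1)^k e^{-\pi k^2 s}$. *)

From Stdlib Require Import Reals ZArith ClassicalEpsilon.
Open Scope R_scope.

Definition theta4_term (s : R) (k : Z) : R :=
  powerRZ (-1) k * exp (- PI * (IZR k) ^ 2 * s).

Definition theta4_partial (s : R) (N : nat) : R :=
  sum_f_R0 (fun i => theta4_term s (Z.of_nat i - Z.of_nat N)%Z) (2 * N).

(* theta_4(s) = sum_{k in Z} (-1)^k e^{-pi k^2 s}: the limit of the
   symmetric partial sums (the series converges absolutely for s > 0). *)
Definition theta4 (s : R) : R :=
  epsilon (inhabits 0) (fun l => Un_cv (theta4_partial s) l).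

From Stdlib Require Import Reals ZArith ClassicalEpsilon Lra Lia Psatz.
From Coquelicot Require Import Coquelicot.
Open Scope R_scope.

(* With the nome q = e^(-pi s), the Jacobi triple product gives
   theta_4(s) = prod_(n >= 1) (1 - q^(2n)) (1 - q^(2n-1))^2.  It is obtained
   here as the limit of the finite identity
   sum_i (-1)^i q^((i-n)^2) [2n, i]_(q^2) = (-1)^n (q; q^2)_n^2,
   a specialization of Rothe's q-binomial theorem, whose distance to the
   partial sums of theta_4 is O(n q^(2n)).  The product also shows theta_4 > 0.
   In the variable u = ln s every factor 1 - e^(-pi m e^u) is log-concave,
   because the derivative of its logarithm is g(pi m e^u) with
   g(y) = y / (e^y - 1) decreasing.  So u |-> ln theta_4(e^u) - 2 ln(1 - e^(-pi e^u))
   is concave, being a limit of concave functions, and its derivative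
   s theta_4'(s) / theta_4(s) - 2 g(pi s) is nonincreasing in s; as g(pi s)
   decreases strictly, s theta_4'(s) / theta_4(s) decreases strictly. *)

(** * Gaussian binomials and the finite triple product *)

Fixpoint prodR (f : nat -> R) (n : nat) : R :=
  match n with O => 1 | S k => prodR f k * f k end.

Lemma prodR_ext f g n : (forall i, (i < n)%nat -> f i = g i) -> prodR f n = prodR g n.
Proof.
  induction n as [|n IH]; intros H; simpl; auto.
  rewrite IH by (intros; apply H; lia). rewrite H by lia. reflexivity.
Qed.

Lemma prodR_shift f n : prodR f (S n) = f O * prodR (fun i => f (S i)) n.
Proof. induction n as [|n IH]; simpl in *. ring. rewrite IH. ring. Qed.

Lemma prodR_add f a b : prodR f (a + b) = prodR f a * prodR (fun i => f (a + i)%nat) b.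
Proof.
  induction b as [|b IH]; simpl. rewrite Nat.add_0_r; ring.
  rewrite Nat.add_succ_r; simpl. rewrite IH. ring.
Qed.

Lemma prodR_rev f n : prodR f n = prodR (fun i => f (n - 1 - i)%nat) n.
Proof.
  induction n as [|n IH]. reflexivity.
  rewrite (prodR_shift (fun i => f (S n - 1 - i)%nat)). simpl prodR at 1. rewrite IH.
  replace (S n - 1 - 0)%nat with n by lia. rewrite Rmult_comm. f_equal.
  apply prodR_ext; intros; f_equal; lia.
Qed.

Lemma prodR_mul f g n : prodR (fun i => f i * g i) n = prodR f n * prodR g n.
Proof. induction n as [|n IH]; simpl. ring. rewrite IH; ring. Qed.

Lemma prodR_const c n : prodR (fun _ => c) n = c ^ n.
Proof. induction n as [|n IH]; simpl. ring. rewrite IH; ring. Qed.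

Lemma prodR_pow_even q n : prodR (fun j => q ^ (2 * j)) n = q ^ (n * (n - 1)).
Proof.
  induction n as [|n IH]; cbn [prodR]. simpl; ring.
  rewrite IH, <- pow_add. f_equal. destruct n; simpl; lia.
Qed.

Lemma prodR_pos f n : (forall i, (i < n)%nat -> 0 < f i) -> 0 < prodR f n.
Proof. induction n; intros H; simpl. lra. apply Rmult_lt_0_compat; auto. Qed.

(* Gaussian binomial coefficients in base [q^2], by the Pascal rule
   [[m+1, k+1] = [m, k] + q^(2(k+1)) [m, k+1]]. *)
Fixpoint qbinom (q : R) (m k : nat) : R :=
  match m, k with
  | _, O => 1
  | O, S _ => 0
  | S m', S k' => qbinom q m' k' + q ^ (2 * S k') * qbinom q m' (S k')
  end.

Lemma qbinom_0 q m : qbinom q m 0 = 1.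
Proof. destruct m; reflexivity. Qed.

Lemma qbinom_gt q m k : (m < k)%nat -> qbinom q m k = 0.
Proof.
  revert k; induction m as [|m IH]; intros k H; destruct k; try lia; simpl; auto.
  rewrite !IH by lia. ring.
Qed.

Definition rothe_sum q m x y :=
  sum_f_R0 (fun i => q ^ (i * (i - 1)) * qbinom q m i * x ^ i * y ^ (m - i)) m.

Lemma pow_triangle q x i :
  q ^ (S i * (S i - 1)) * x ^ S i = x * q ^ (i * (i - 1)) * (x * q ^ 2) ^ i.
Proof.
  replace (S i * (S i - 1))%nat with (i * (i - 1) + 2 * i)%nat
    by (destruct i; [reflexivity|rewrite Nat.sub_succ, Nat.sub_0_r; nia]).
  rewrite pow_add, Rpow_mult_distr, <- pow_mult. simpl pow. ring.
Qed.

Lemma rothe_sum_mul_y q m x y :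
  y * rothe_sum q m (x * q ^ 2) y = y ^ S m +
  sum_f_R0 (fun i => q ^ (2 * S i) * qbinom q m (S i) * q ^ (S i * (S i - 1)) * x ^ S i
                     * y ^ (m - i)) m.
Proof.
  unfold rothe_sum. rewrite scal_sum.
  set (t i := q ^ (i * (i - 1)) * qbinom q m i * (x * q ^ 2) ^ i * y ^ (S m - i)).
  rewrite (sum_eq _ t) by (intros i Hi; unfold t;
    replace (S m - i)%nat with (S (m - i)) by lia; rewrite <- (tech_pow_Rmult y); ring).
  replace (sum_f_R0 t m) with (sum_f_R0 t (S m))
    by (rewrite tech5; unfold t; rewrite (qbinom_gt q m (S m)) by lia; ring).
  rewrite (decomp_sum _ (S m)) by lia. simpl pred. f_equal.
  - unfold t. rewrite qbinom_0, Nat.sub_0_r. simpl. ring.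
  - apply sum_eq; intros i Hi. unfold t.
    replace (S m - S i)%nat with (m - i)%nat by lia.
    rewrite Rpow_mult_distr, <- pow_mult. ring.
Qed.

Lemma rothe_sum_S q m x y :
  rothe_sum q (S m) x y = (y + x) * rothe_sum q m (x * q ^ 2) y.
Proof.
  rewrite Rmult_plus_distr_r, rothe_sum_mul_y. unfold rothe_sum.
  rewrite (decomp_sum _ (S m)) by lia. simpl pred. rewrite scal_sum, qbinom_0.
  rewrite Rplus_assoc, <- sum_plus. f_equal; [simpl; ring|].
  apply sum_eq; intros i Hi. cbn [qbinom]. replace (S m - S i)%nat with (m - i)%nat by lia.
  replace (q ^ (i * (i - 1)) * qbinom q m i * (x * q ^ 2) ^ i * y ^ (m - i) * x)
    with (q ^ (S i * (S i - 1)) * x ^ S i * qbinom q m i * y ^ (m - i))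
    by (rewrite pow_triangle; ring).
  ring.
Qed.

Lemma qbinom_rothe q m x y :
  prodR (fun j => y + x * q ^ (2 * j)) m = rothe_sum q m x y.
Proof.
  revert x; induction m as [|m IH]; intros x.
  - unfold rothe_sum; simpl. ring.
  - rewrite prodR_shift, rothe_sum_S, <- IH. simpl (q ^ (2 * 0)). rewrite Rmult_1_r.
    f_equal. apply prodR_ext; intros i _.
    replace (2 * S i)%nat with (2 + 2 * i)%nat by lia. rewrite pow_add. ring.
Qed.

(* [qpoch2 q m = (q^2; q^2)_m] and [qpoch_odd q n = (q; q^2)_n]. *)
Definition qpoch2 q m := prodR (fun j => 1 - q ^ (2 * S j)) m.
Definition qpoch_odd q n := prodR (fun i => 1 - q ^ (2 * i + 1)) n.

Lemma qpoch2_S q m : qpoch2 q (S m) = qpoch2 q m * (1 - q ^ (2 * S m)).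
Proof. reflexivity. Qed.

Lemma qbinom_qpoch q m k : (k <= m)%nat ->
  qbinom q m k * qpoch2 q k * qpoch2 q (m - k) = qpoch2 q m.
Proof.
  revert k; induction m as [|m IH]; intros k Hk.
  - replace k with O by lia. unfold qpoch2; simpl; ring.
  - destruct k as [|k].
    + rewrite qbinom_0. simpl (S m - 0)%nat. unfold qpoch2; simpl; ring.
    + cbn [qbinom]. simpl (S m - S k)%nat. rewrite !qpoch2_S.
      destruct (Nat.eq_dec k m) as [->|Hne].
      * rewrite (qbinom_gt q m (S m)) by lia.
        pose proof (IH m (le_n m)) as E. rewrite Nat.sub_diag in *.
        transitivity (qbinom q m m * qpoch2 q m * qpoch2 q 0 * (1 - q ^ (2 * S m))).
        { ring. }
        rewrite E. reflexivity.
      * pose proof (IH k ltac:(lia)) as E1. pose proof (IH (S k) ltac:(lia)) as E2.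
        set (r := (m - S k)%nat) in *.
        replace (m - k)%nat with (S r) in * by (unfold r; lia).
        replace (2 * S m)%nat with (2 * S k + 2 * S r)%nat by (unfold r; lia).
        rewrite pow_add.
        transitivity ((1 - q ^ (2 * S k)) * (qbinom q m k * qpoch2 q k * qpoch2 q (S r))
          + q ^ (2 * S k) * (1 - q ^ (2 * S r)) * (qbinom q m (S k) * qpoch2 q (S k) * qpoch2 q r)).
        { rewrite !qpoch2_S. ring. }
        rewrite E1, E2. ring.
Qed.

Definition distn (i n : nat) : nat := (i - n) + (n - i).

Lemma rothe_exponent N i : (i <= 2 * S N)%nat ->
  (i * (i - 1) + (2 * N + 1) * (2 * S N - i) =
   distn i (S N) * distn i (S N) + (S N * (S N - 1) + (2 * N + 1) * S N))%nat.
Proof.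
  intros H. unfold distn. replace (S N - 1)%nat with N by lia.
  destruct (Nat.le_gt_cases i (S N)) as [Hi|Hi].
  - destruct i as [|i]. { simpl. nia. }
    assert (exists d, N = i + d)%nat as [d ->] by (exists (N - i)%nat; lia).
    replace (S i - 1)%nat with i by lia. replace (S i - S (i + d))%nat with O by lia.
    replace (S (i + d) - S i)%nat with d by lia.
    replace (2 * S (i + d) - S i)%nat with (i + 2 * d + 1)%nat by lia. nia.
  - assert (exists d, i = S N + S d)%nat as [d ->] by (exists (i - S N - 1)%nat; lia).
    assert (exists e, N = d + e)%nat as [e ->] by (exists (N - d)%nat; lia).
    replace (S (d + e) + S d - 1)%nat with (d + e + S d)%nat by lia.
    replace (S (d + e) + S d - S (d + e))%nat with (S d) by lia.
    replace (S (d + e) - (S (d + e) + S d))%nat with O by lia.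
    replace (2 * S (d + e) - (S (d + e) + S d))%nat with e by lia. nia.
Qed.

Lemma prodR_qpoch_odd_sq q N :
  prodR (fun j => q ^ (2 * N + 1) + (-1) * q ^ (2 * j)) (2 * S N) =
  (-1) ^ S N * q ^ (S N * (S N - 1) + (2 * N + 1) * S N) * qpoch_odd q (S N) * qpoch_odd q (S N).
Proof.
  replace (2 * S N)%nat with (S N + S N)%nat by lia. rewrite prodR_add.
  rewrite (prodR_ext (fun i => q ^ (2 * N + 1) + -1 * q ^ (2 * (S N + i)))
                     (fun i => q ^ (2 * N + 1) * (1 - q ^ (2 * i + 1)))).
  2:{ intros i _. replace (2 * (S N + i))%nat with (2 * N + 1 + (2 * i + 1))%nat by lia.
      rewrite (pow_add q (2 * N + 1) (2 * i + 1)). ring. }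
  rewrite prodR_mul, prodR_const, prodR_rev.
  rewrite (prodR_ext (fun i => q ^ (2 * N + 1) + -1 * q ^ (2 * (S N - 1 - i)))
                     (fun i => (-1) * q ^ (2 * (N - i)) * (1 - q ^ (2 * i + 1)))).
  2:{ intros i Hi. replace (S N - 1 - i)%nat with (N - i)%nat by lia.
      replace (2 * N + 1)%nat with (2 * (N - i) + (2 * i + 1))%nat by lia.
      rewrite (pow_add q (2 * (N - i)) (2 * i + 1)). ring. }
  rewrite !prodR_mul, prodR_const, (prodR_rev (fun i => q ^ (2 * (N - i)))).
  rewrite (prodR_ext (fun i => q ^ (2 * (N - (S N - 1 - i)))) (fun i => q ^ (2 * i)))
    by (intros; f_equal; lia).
  rewrite prodR_pow_even. unfold qpoch_odd.
  rewrite (pow_add q (S N * (S N - 1))), (pow_mult q (2 * N + 1) (S N)). ring.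
Qed.

(* Finite form of the Jacobi triple product, from Rothe's identity at
   [x = -1], [y = q^(2n-1)] with [n = S N]. *)
Lemma jacobi_finite q N : 0 < q ->
  sum_f_R0 (fun i => (-1) ^ i * q ^ (distn i (S N) * distn i (S N)) * qbinom q (2 * S N) i)
    (2 * S N)
  = (-1) ^ S N * qpoch_odd q (S N) * qpoch_odd q (S N).
Proof.
  intros Hq.
  pose proof (qbinom_rothe q (2 * S N) (-1) (q ^ (2 * N + 1))) as R.
  rewrite prodR_qpoch_odd_sq in R. unfold rothe_sum in R.
  set (c := (S N * (S N - 1) + (2 * N + 1) * S N)%nat) in *.
  rewrite (sum_eq _ (fun i => ((-1) ^ i * q ^ (distn i (S N) * distn i (S N))
                                * qbinom q (2 * S N) i) * q ^ c)) in R.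
  2:{ intros i Hi. rewrite <- pow_mult.
      transitivity ((-1) ^ i * q ^ (i * (i - 1) + (2 * N + 1) * (2 * S N - i))
                    * qbinom q (2 * S N) i).
      { rewrite pow_add. ring. }
      unfold c. rewrite rothe_exponent by lia. rewrite pow_add. ring. }
  rewrite <- scal_sum in R.
  assert (0 < q ^ c) by (apply pow_lt; lra).
  apply (Rmult_eq_reg_l (q ^ c)); [|lra]. rewrite <- R. ring.
Qed.

(** * Distance between the finite product and the partial sums *)

Lemma pow_le_one q n : 0 <= q <= 1 -> q ^ n <= 1.
Proof. intros H. rewrite <- (pow1 n). apply pow_incr. lra. Qed.

Lemma pow_decr q k m : 0 <= q <= 1 -> (k <= m)%nat -> q ^ m <= q ^ k.
Proof.
  intros H Hkm. replace m with (k + (m - k))%nat by lia. rewrite pow_add.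
  pose proof (pow_le q k ltac:(lra)). pose proof (pow_le_one q (m - k) H). nra.
Qed.

Definition jacobi_prod q n := qpoch2 q n * qpoch_odd q n * qpoch_odd q n.

Definition jacobi_partial q n :=
  sum_f_R0 (fun i => (-1) ^ n * (-1) ^ i * q ^ (distn i n * distn i n)) (2 * n).

Section Estimates.
Variable q : R.
Hypothesis q_pos : 0 < q.
Hypothesis q_lt1 : q < 1.

Lemma sqr_q_lt1 : q ^ 2 < 1.
Proof. simpl. nra. Qed.

Lemma one_minus_pow_pos m : (0 < m)%nat -> 0 < 1 - q ^ m.
Proof.
  intros Hm. assert (q ^ m <= q ^ 1) by (apply pow_decr; lra || lia). simpl in *. lra.
Qed.

Lemma qpoch2_pos m : 0 < qpoch2 q m.
Proof. apply prodR_pos. intros. apply one_minus_pow_pos. lia. Qed.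

Lemma qpoch2_decr k d : qpoch2 q (k + d) <= qpoch2 q k.
Proof.
  induction d as [|d IH]. rewrite Nat.add_0_r; lra.
  rewrite Nat.add_succ_r, qpoch2_S.
  pose proof (qpoch2_pos (k + d)). pose proof (pow_le q (2 * S (k + d)) ltac:(lra)). nra.
Qed.

Definition qpoch2_tail k := q ^ (2 * S k) / (1 - q ^ 2).

Lemma qpoch2_tail_pos k : 0 <= qpoch2_tail k.
Proof.
  pose proof sqr_q_lt1. apply Rmult_le_pos. apply pow_le; lra.
  apply Rlt_le, Rinv_0_lt_compat. lra.
Qed.

Lemma qpoch2_tail_decr k m : (k <= m)%nat -> qpoch2_tail m <= qpoch2_tail k.
Proof.
  intros H. pose proof sqr_q_lt1. apply Rmult_le_compat_r.
  apply Rlt_le, Rinv_0_lt_compat. lra. apply pow_decr; lra || lia.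
Qed.

(* Weierstrass product inequality, with the geometric sum of the
   [q^(2j)], [k < j <= k + d], written in closed form. *)
Lemma qpoch2_lower_geom k d :
  qpoch2 q k * (1 - q ^ (2 * S k) * (1 - q ^ (2 * d)) / (1 - q ^ 2)) <= qpoch2 q (k + d).
Proof.
  pose proof sqr_q_lt1.
  induction d as [|d IH].
  - rewrite Nat.add_0_r. simpl (q ^ (2 * 0)). unfold Rdiv.
    rewrite Rminus_diag, Rmult_0_r, Rmult_0_l, Rminus_0_r. lra.
  - rewrite Nat.add_succ_r, qpoch2_S.
    set (A := q ^ (2 * S k) * (1 - q ^ (2 * d)) / (1 - q ^ 2)) in *.
    set (r := q ^ (2 * S (k + d))).
    assert (HA : q ^ (2 * S k) * (1 - q ^ (2 * S d)) / (1 - q ^ 2) = A + r).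
    { unfold A, r. replace (2 * S (k + d))%nat with (2 * S k + 2 * d)%nat by lia.
      replace (2 * S d)%nat with (2 * d + 2)%nat by lia. rewrite !pow_add. field. lra. }
    rewrite HA.
    assert (0 <= A).
    { unfold A. apply Rmult_le_pos. apply Rmult_le_pos. apply pow_le; lra.
      pose proof (pow_le_one q (2 * d) ltac:(lra)). lra.
      apply Rlt_le, Rinv_0_lt_compat. lra. }
    assert (0 <= r <= 1) by (split; [apply pow_le; lra| apply pow_le_one; lra]).
    pose proof (qpoch2_pos k).
    assert (0 <= qpoch2 q k * A * r) by (apply Rmult_le_pos; [apply Rmult_le_pos|]; lra).
    apply Rle_trans with (qpoch2 q k * (1 - A) * (1 - r)). nra.
    apply Rmult_le_compat_r; lra.
Qed.

Lemma qpoch2_lower k d : qpoch2 q k * (1 - qpoch2_tail k) <= qpoch2 q (k + d).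
Proof.
  eapply Rle_trans; [|apply qpoch2_lower_geom]. apply Rmult_le_compat_l.
  { pose proof (qpoch2_pos k); lra. }
  unfold qpoch2_tail.
  assert (0 <= q ^ (2 * S k) * q ^ (2 * d) / (1 - q ^ 2)).
  { pose proof sqr_q_lt1. apply Rmult_le_pos. apply Rmult_le_pos; apply pow_le; lra.
    apply Rlt_le, Rinv_0_lt_compat. lra. }
  unfold Rdiv in *. nra.
Qed.

Lemma qpoch2_ratio_near1 a n w : (a <= n)%nat ->
  w * qpoch2 q a * qpoch2 q (2 * n - a) = qpoch2 q n * qpoch2 q (2 * n) ->
  Rabs (w - 1) <= 2 * qpoch2_tail a.
Proof.
  intros Ha Hw.
  pose proof (qpoch2_pos a) as Pa. pose proof (qpoch2_pos (2 * n - a)) as Pb.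
  pose proof (qpoch2_pos n). pose proof (qpoch2_pos (2 * n)).
  set (al := qpoch2 q n / qpoch2 q a). set (be := qpoch2 q (2 * n) / qpoch2 q (2 * n - a)).
  assert (Hwab : w = al * be).
  { unfold al, be. apply (Rmult_eq_reg_r (qpoch2 q a * qpoch2 q (2 * n - a))).
    - transitivity (qpoch2 q n * qpoch2 q (2 * n)); [rewrite <- Hw; ring|field; lra].
    - nra. }
  pose proof (qpoch2_decr a (n - a)) as L1. pose proof (qpoch2_lower a (n - a)) as G1.
  replace (a + (n - a))%nat with n in L1, G1 by lia.
  pose proof (qpoch2_decr (2 * n - a) a) as L2. pose proof (qpoch2_lower (2 * n - a) a) as G2.
  replace (2 * n - a + a)%nat with (2 * n)%nat in L2, G2 by lia.
  pose proof (qpoch2_tail_decr a (2 * n - a) ltac:(lia)).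
  pose proof (qpoch2_tail_pos a).
  assert (Hal : 1 - qpoch2_tail a <= al <= 1).
  { unfold al. split; apply (Rmult_le_reg_r (qpoch2 q a)); auto; field_simplify; lra. }
  assert (Hbe : 1 - qpoch2_tail a <= be <= 1).
  { unfold be. split; apply (Rmult_le_reg_r (qpoch2 q (2 * n - a))); auto;
      field_simplify; nra. }
  assert (0 < al) by (apply Rdiv_lt_0_compat; auto).
  assert (0 < be) by (apply Rdiv_lt_0_compat; auto).
  rewrite Hwab, Rabs_left1 by nra. nra.
Qed.

Lemma jacobi_term_bound n i : (i <= 2 * n)%nat ->
  Rabs ((-1) ^ n * (-1) ^ i * q ^ (distn i n * distn i n)
        * (qpoch2 q n * qbinom q (2 * n) i - 1))
  <= 2 * (q ^ (2 * n + 1) / (1 - q ^ 2)).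
Proof.
  intros Hi.
  set (d := distn i n). set (a := (n - d)%nat).
  assert (Hd : (d <= n)%nat /\ (i = a \/ i = 2 * n - a)%nat) by (unfold a, d, distn; lia).
  assert (Hw : (qpoch2 q n * qbinom q (2 * n) i) * qpoch2 q a * qpoch2 q (2 * n - a)
               = qpoch2 q n * qpoch2 q (2 * n)).
  { destruct Hd as [_ [Ei | Ei]]; rewrite Ei.
    - rewrite <- (qbinom_qpoch q (2 * n) a) by lia. ring.
    - rewrite <- (qbinom_qpoch q (2 * n) (2 * n - a)) by lia.
      replace (2 * n - (2 * n - a))%nat with a by lia. ring. }
  pose proof (qpoch2_ratio_near1 a n _ ltac:(lia) Hw) as Wb. unfold qpoch2_tail in Wb.
  rewrite !Rabs_mult, !pow_1_abs, (Rabs_right (q ^ _)) by (apply Rle_ge, pow_le; lra).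
  (* [d^2 + 2(n - d + 1) >= 2n + 1] since [(d - 1)^2 >= 0]. *)
  assert (Hexp : q ^ (d * d) * q ^ (2 * S a) <= q ^ (2 * n + 1)).
  { rewrite <- pow_add. apply pow_decr. lra. unfold a. destruct Hd as [Hdn _].
    clearbody d. clear -Hdn.
    assert (exists e, n = d + e)%nat as [e ->] by (exists (n - d)%nat; lia).
    replace (d + e - d)%nat with e by lia. nia. }
  pose proof (pow_le q (d * d) ltac:(lra)). pose proof sqr_q_lt1.
  assert (0 < / (1 - q ^ 2)) by (apply Rinv_0_lt_compat; lra).
  unfold Rdiv in *. rewrite !Rmult_1_l.
  apply Rle_trans with (q ^ (d * d) * (2 * (q ^ (2 * S a) * / (1 - q ^ 2)))).
  { apply Rmult_le_compat_l; auto. }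
  nra.
Qed.

Lemma jacobi_prod_minus_partial N :
  jacobi_prod q (S N) - jacobi_partial q (S N) =
  sum_f_R0 (fun i => (-1) ^ S N * (-1) ^ i * q ^ (distn i (S N) * distn i (S N)) *
                     (qpoch2 q (S N) * qbinom q (2 * S N) i - 1)) (2 * S N).
Proof.
  rewrite (sum_eq _ (fun i => (-1) ^ i * q ^ (distn i (S N) * distn i (S N))
                               * qbinom q (2 * S N) i * ((-1) ^ S N * qpoch2 q (S N))
      - (-1) ^ S N * (-1) ^ i * q ^ (distn i (S N) * distn i (S N)))) by (intros; ring).
  rewrite minus_sum, <- scal_sum, jacobi_finite by lra.
  assert (Hsq : (-1) ^ S N * (-1) ^ S N = 1).
  { rewrite <- pow_add, <- (pow_1_even (S N)). f_equal. lia. }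
  rewrite <- (Rmult_1_l (jacobi_prod q (S N))), <- Hsq. unfold jacobi_prod, jacobi_partial. ring.
Qed.

Lemma jacobi_prod_minus_partial_bound N :
  Rabs (jacobi_prod q (S N) - jacobi_partial q (S N)) <=
  INR (S (2 * S N)) * (2 * (q ^ (2 * S N + 1) / (1 - q ^ 2))).
Proof.
  rewrite jacobi_prod_minus_partial. eapply Rle_trans. apply Rsum_abs.
  rewrite Rmult_comm, <- sum_cte. apply sum_Rle. intros i Hi. apply jacobi_term_bound. lia.
Qed.

End Estimates.

(** * theta_4 as a power series in the nome *)

Definition nome (s : R) := exp (- PI * s).

Lemma nome_pos s : 0 < nome s.
Proof. apply exp_pos. Qed.

Lemma nome_lt1 s : 0 < s -> nome s < 1.
Proof. intros Hs. rewrite <- exp_0. apply exp_increasing. pose proof PI_RGT_0. nra. Qed.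

Lemma exp_pow_INR x m : exp x ^ m = exp (INR m * x).
Proof.
  induction m as [|m IH]. simpl. rewrite Rmult_0_l, exp_0. reflexivity.
  rewrite <- tech_pow_Rmult, IH, <- exp_plus, S_INR. f_equal. ring.
Qed.

Lemma powerRZ_m1 k : powerRZ (-1) k = (-1) ^ (Z.abs_nat k).
Proof.
  destruct k; simpl; try reflexivity.
  rewrite <- pow_inv. replace (/ -1) with (-1) by field. reflexivity.
Qed.

Lemma pow_m1_distn i n : (-1) ^ (distn i n) = (-1) ^ n * (-1) ^ i.
Proof.
  rewrite <- pow_add. unfold distn. destruct (Nat.le_ge_cases i n).
  - replace (n + i)%nat with ((i - n + (n - i)) + 2 * i)%nat by lia.
    rewrite (pow_add _ _ (2 * i)), pow_1_even. ring.
  - replace (n + i)%nat with ((i - n + (n - i)) + 2 * n)%nat by lia.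
    rewrite (pow_add _ _ (2 * n)), pow_1_even. ring.
Qed.

Lemma theta4_term_nome s i n :
  theta4_term s (Z.of_nat i - Z.of_nat n) =
  (-1) ^ n * (-1) ^ i * nome s ^ (distn i n * distn i n).
Proof.
  assert (Hd : Z.abs_nat (Z.of_nat i - Z.of_nat n) = distn i n) by (unfold distn; lia).
  unfold theta4_term, nome. rewrite powerRZ_m1, Hd, pow_m1_distn, exp_pow_INR. f_equal.
  f_equal. rewrite mult_INR, <- Hd, INR_IZR_INZ, Nat2Z.inj_abs_nat, <- mult_IZR.
  rewrite <- Z.abs_mul, Z.abs_eq by apply Z.square_nonneg. rewrite mult_IZR. ring.
Qed.

Lemma theta4_partial_nome s n : theta4_partial s n = jacobi_partial (nome s) n.
Proof. apply sum_eq. intros. apply theta4_term_nome. Qed.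

Lemma theta4_partial_S s n : theta4_partial s (S n) =
  theta4_partial s n + 2 * (-1) ^ (S n) * nome s ^ (S n * S n).
Proof.
  unfold theta4_partial.
  rewrite (decomp_sum _ (2 * S n)) by lia.
  replace (pred (2 * S n)) with (S (2 * n)) by lia.
  rewrite tech5.
  rewrite (sum_eq (fun i => theta4_term s (Z.of_nat (S i) - Z.of_nat (S n)))
                  (fun i => theta4_term s (Z.of_nat i - Z.of_nat n))) by (intros; f_equal; lia).
  replace (Z.of_nat (S (S (2 * n))) - Z.of_nat (S n))%Z
     with (Z.of_nat (2 * S n) - Z.of_nat (S n))%Z by lia.
  rewrite !theta4_term_nome.
  replace (distn 0 (S n)) with (S n) by (unfold distn; lia).
  replace (distn (2 * S n) (S n)) with (S n) by (unfold distn; lia).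
  rewrite pow_1_even. simpl pow at 2. ring.
Qed.

Definition theta4_coef (m : nat) : R :=
  if Nat.eqb (Nat.sqrt m * Nat.sqrt m) m
  then (if Nat.eqb m 0 then 1 else 2 * (-1) ^ Nat.sqrt m) else 0.

Lemma theta4_coef_square k : theta4_coef (S k * S k) = 2 * (-1) ^ (S k).
Proof. unfold theta4_coef. rewrite Nat.sqrt_square, Nat.eqb_refl. reflexivity. Qed.

Lemma theta4_coef_nonsquare n j : (j < 2 * n)%nat -> theta4_coef (S (n * n) + j) = 0.
Proof.
  intros H. unfold theta4_coef. rewrite (Nat.sqrt_unique _ n) by nia.
  destruct (Nat.eqb_spec (n * n) (S (n * n) + j)). lia. reflexivity.
Qed.

Lemma theta4_coef_bound m : Rabs (theta4_coef m) <= 2.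
Proof.
  unfold theta4_coef. destruct (Nat.eqb _ m); [destruct (Nat.eqb m 0)|].
  - rewrite Rabs_R1. lra.
  - rewrite Rabs_mult, pow_1_abs, Rabs_right by lra. lra.
  - rewrite Rabs_R0. lra.
Qed.

Lemma sum_f_R0_last (f : nat -> R) m :
  (forall j, (j < m)%nat -> f j = 0) -> sum_f_R0 f m = f m.
Proof.
  induction m as [|m IH]; intros H. reflexivity.
  simpl. rewrite IH by (intros; apply H; lia). rewrite H by lia. ring.
Qed.

Lemma theta4_partial_pseries s n :
  sum_f_R0 (fun m => theta4_coef m * nome s ^ m) (n * n) = theta4_partial s n.
Proof.
  induction n as [|n IH].
  - unfold theta4_partial, theta4_term, theta4_coef. simpl.
    replace (- PI * (0 * (0 * 1)) * s) with 0 by ring. rewrite exp_0. ring.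
  - rewrite theta4_partial_S, <- IH, (tech2 _ (n * n) (S n * S n)) by nia. f_equal.
    replace (S n * S n - S (n * n))%nat with (2 * n)%nat by nia.
    rewrite sum_f_R0_last.
    + replace (S (n * n) + 2 * n)%nat with (S n * S n)%nat by nia.
      rewrite theta4_coef_square. ring.
    + intros j Hj. rewrite theta4_coef_nonsquare by lia. ring.
Qed.

Lemma CV_radius_gt_of_bounded (a : nat -> R) M x :
  (forall n, Rabs (a n) <= M) -> Rabs x < 1 -> Rbar_lt (Rabs x) (CV_radius a).
Proof.
  intros Ha Hx. set (r := (1 + Rabs x) / 2). pose proof (Rabs_pos x).
  apply Rbar_lt_le_trans with (Finite r); [simpl; unfold r; lra|].
  apply (proj1 (CV_radius_bounded a)). exists M. intros n.
  rewrite Rabs_mult, (Rabs_right (r ^ n)) by (apply Rle_ge, pow_le; unfold r; lra).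
  pose proof (Ha n). pose proof (Rabs_pos (a n)).
  pose proof (pow_le_one r n ltac:(unfold r; lra)). pose proof (pow_le r n ltac:(unfold r; lra)).
  nra.
Qed.

Lemma theta4_coef_radius s : 0 < s -> Rbar_lt (Rabs (nome s)) (CV_radius theta4_coef).
Proof.
  intros Hs. apply (CV_radius_gt_of_bounded _ 2); [apply theta4_coef_bound|].
  pose proof (nome_pos s). pose proof (nome_lt1 s Hs). rewrite Rabs_right; lra.
Qed.

Lemma theta4_PSeries s : 0 < s ->
  Un_cv (theta4_partial s) (PSeries theta4_coef (nome s)) /\
  theta4 s = PSeries theta4_coef (nome s).
Proof.
  intros Hs.
  pose proof (PSeries_correct _ _ (CV_radius_inside _ _ (theta4_coef_radius s Hs))) as P.
  apply is_pseries_Reals in P.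
  assert (Hcv : Un_cv (theta4_partial s) (PSeries theta4_coef (nome s))).
  { intros e He. destruct (P e He) as [N HN]. exists N. intros n Hn.
    rewrite <- theta4_partial_pseries. apply HN. nia. }
  split; auto.
  apply (UL_sequence (theta4_partial s)); auto.
  apply (epsilon_spec (inhabits 0) (fun l => Un_cv (theta4_partial s) l)).
  exists (PSeries theta4_coef (nome s)). exact Hcv.
Qed.

Definition theta4_deriv (s : R) : R :=
  PSeries (PS_derive theta4_coef) (nome s) * (nome s * (- PI)).

Lemma derivable_pt_lim_local (f g : R -> R) x l : 0 < x ->
  (forall y, 0 < y -> g y = f y) -> derivable_pt_lim f x l -> derivable_pt_lim g x l.
Proof.
  intros Hx Heq D e He. destruct (D e He) as [d Hd].
  assert (Hm : 0 < Rmin d x) by (apply Rmin_pos; [apply cond_pos| auto]).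
  exists (mkposreal _ Hm). intros h Hh Hhd. simpl in Hhd.
  pose proof (Rmin_l d x). pose proof (Rmin_r d x).
  assert (0 < x + h) by (apply Rabs_def2 in Hhd; lra).
  rewrite !Heq by lra. apply Hd; auto. lra.
Qed.

Lemma derivable_pt_lim_theta4 s : 0 < s -> derivable_pt_lim theta4 s (theta4_deriv s).
Proof.
  intros Hs.
  apply derivable_pt_lim_local with (f := fun y => PSeries theta4_coef (nome y)); auto.
  { intros y Hy. apply theta4_PSeries; auto. }
  apply (derivable_pt_lim_comp nome).
  - apply is_derive_Reals. unfold nome. auto_derive; auto. ring.
  - apply is_derive_Reals, is_derive_PSeries, theta4_coef_radius, Hs.
Qed.

(** * Product formula and positivity *)

Lemma theta4_partial_lim s : 0 < s -> is_lim_seq (theta4_partial s) (theta4 s).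
Proof.
  intros Hs. destruct (theta4_PSeries s Hs) as [Hcv ->]. apply is_lim_seq_Reals, Hcv.
Qed.

Lemma is_lim_seq_INR_pow q : Rabs q < 1 -> is_lim_seq (fun m => INR (S m) * q ^ m) 0.
Proof.
  intros Hq.
  assert (Hr : Rbar_lt (Rabs q) (CV_radius (PS_derive (fun _ => 1)))).
  { rewrite CV_radius_derive. apply (CV_radius_gt_of_bounded _ 1); auto.
    intros; rewrite Rabs_R1; lra. }
  apply is_lim_seq_abs_0, ex_series_lim_0.
  apply (ex_series_ext (fun n => Rabs (PS_derive (fun _ => 1) n * q ^ n))).
  { intros n. unfold PS_derive. rewrite Rmult_1_r. reflexivity. }
  apply CV_disk_inside, Hr.
Qed.

Lemma jacobi_prod_lim s : 0 < s ->
  is_lim_seq (fun N => jacobi_prod (nome s) (S N)) (theta4 s).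
Proof.
  intros Hs. set (q := nome s).
  assert (Hq : 0 < q < 1) by (split; [apply nome_pos| apply nome_lt1, Hs]).
  assert (Hq2 : 0 < 1 - q ^ 2) by (simpl; nra).
  set (err N := jacobi_prod q (S N) - jacobi_partial q (S N)).
  assert (Herr : is_lim_seq err 0).
  { apply is_lim_seq_abs_0.
    set (c m := INR (S m) * q ^ m).
    assert (Hc : is_lim_seq (fun N => 2 * q / (1 - q ^ 2) * c (2 * S N)%nat) 0).
    { replace (Finite 0) with (Rbar_mult (2 * q / (1 - q ^ 2)) 0) by (simpl; f_equal; ring).
      apply is_lim_seq_scal_l, (is_lim_seq_subseq c), is_lim_seq_INR_pow.
      - apply eventually_subseq. intros; lia.
      - rewrite Rabs_right; lra. }
    apply (is_lim_seq_le_le (fun _ => 0) _ (fun N => 2 * q / (1 - q ^ 2) * c (2 * S N)%nat));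
      [|apply is_lim_seq_const|exact Hc].
    intros N. split; [apply Rabs_pos|].
    eapply Rle_trans; [apply jacobi_prod_minus_partial_bound; lra|].
    unfold c. rewrite Nat.add_1_r, <- tech_pow_Rmult. apply Req_le. field. lra. }
  apply (is_lim_seq_ext (fun N => jacobi_partial q (S N) + err N)).
  { intros N. unfold err. ring. }
  replace (theta4 s) with (theta4 s + 0) by ring.
  apply is_lim_seq_plus'; auto.
  apply (is_lim_seq_incr_1 (fun N => jacobi_partial q N)).
  apply (is_lim_seq_ext (theta4_partial s)); [apply theta4_partial_nome|].
  apply theta4_partial_lim, Hs.
Qed.

Lemma exp_le_mono x y : x <= y -> exp x <= exp y.
Proof. intros [H| ->]; [apply Rlt_le, exp_increasing, H| apply Rle_refl]. Qed.

Lemma exp_le_one_minus q x : 0 < q < 1 -> 0 <= x <= q -> exp (- (x / (1 - q))) <= 1 - x.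
Proof.
  intros Hq Hx. set (y := x / (1 - q)).
  assert (Hy : 0 <= y) by (apply Rmult_le_pos; [lra| apply Rlt_le, Rinv_0_lt_compat; lra]).
  pose proof (exp_ineq1_le y). pose proof (exp_pos y).
  assert (Hm : 1 <= (1 - x) * (1 + y)).
  { unfold y. replace ((1 - x) * (1 + x / (1 - q))) with (1 + x * (q - x) / (1 - q))
      by (field; lra).
    assert (0 <= x * (q - x) / (1 - q)).
    { apply Rmult_le_pos. apply Rmult_le_pos; lra. apply Rlt_le, Rinv_0_lt_compat; lra. }
    lra. }
  rewrite exp_Ropp. apply (Rmult_le_reg_r (exp y)); auto. rewrite Rinv_l by lra. nra.
Qed.

(* [ln (1 - x) >= - x / (1 - q)] for [0 <= x <= q], summed over [x_j <= q^(j+1)]. *)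
Lemma prodR_one_minus_lower q (x : nat -> R) n : 0 < q < 1 ->
  (forall j, 0 <= x j <= q ^ (S j)) ->
  exp (- (q / ((1 - q) * (1 - q)))) <= prodR (fun j => 1 - x j) n.
Proof.
  intros Hq Hx.
  assert (Hgeom : exp (- ((q - q ^ (S n)) / ((1 - q) * (1 - q))))
                  <= prodR (fun j => 1 - x j) n).
  { induction n as [|n IH].
    - simpl. replace (- ((q - q * 1) / ((1 - q) * (1 - q)))) with 0 by (field; lra).
      rewrite exp_0. lra.
    - pose proof (pow_decr q 1 (S n) ltac:(lra) ltac:(lia)) as Hqn. rewrite pow_1 in Hqn.
      assert (F : exp (- (q ^ (S n) / (1 - q))) <= 1 - x n).
      { specialize (Hx n). eapply Rle_trans; [|apply (exp_le_one_minus q); lra].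
        apply exp_le_mono. apply Ropp_le_contravar, Rmult_le_compat_r; [|lra].
        apply Rlt_le, Rinv_0_lt_compat; lra. }
      replace (- ((q - q ^ S (S n)) / ((1 - q) * (1 - q)))) with
        (- ((q - q ^ (S n)) / ((1 - q) * (1 - q))) + - (q ^ (S n) / (1 - q)))
        by (rewrite <- (tech_pow_Rmult q (S n)); field; lra).
      rewrite exp_plus. simpl prodR. apply Rmult_le_compat; auto; apply Rlt_le, exp_pos. }
  eapply Rle_trans; [|exact Hgeom]. apply exp_le_mono, Ropp_le_contravar.
  pose proof (pow_le q (S n) ltac:(lra)). unfold Rdiv.
  apply Rmult_le_compat_r; [|lra]. apply Rlt_le, Rinv_0_lt_compat. nra.
Qed.

Lemma jacobi_prod_lower q n : 0 < q < 1 ->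
  exp (- (q / ((1 - q) * (1 - q)))) ^ 3 <= jacobi_prod q n.
Proof.
  intros Hq. unfold jacobi_prod, qpoch2, qpoch_odd.
  assert (P1 : exp (- (q / ((1 - q) * (1 - q)))) <= prodR (fun j => 1 - q ^ (2 * S j)) n).
  { apply prodR_one_minus_lower; auto. intros j. split. apply pow_le; lra.
    apply pow_decr; lra || lia. }
  assert (P2 : exp (- (q / ((1 - q) * (1 - q)))) <= prodR (fun j => 1 - q ^ (2 * j + 1)) n).
  { apply prodR_one_minus_lower; auto. intros j. split. apply pow_le; lra.
    apply pow_decr; lra || lia. }
  pose proof (exp_pos (- (q / ((1 - q) * (1 - q))))).
  set (c := exp (- (q / ((1 - q) * (1 - q))))) in *.
  replace (c ^ 3) with (c * c * c) by ring.
  apply Rmult_le_compat; [nra|lra| apply Rmult_le_compat; lra | lra].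
Qed.

Lemma theta4_pos s : 0 < s -> 0 < theta4 s.
Proof.
  intros Hs. set (q := nome s).
  assert (Hq : 0 < q < 1) by (split; [apply nome_pos| apply nome_lt1, Hs]).
  apply Rlt_le_trans with (exp (- (q / ((1 - q) * (1 - q)))) ^ 3).
  { apply pow_lt, exp_pos. }
  change (Rbar_le (exp (- (q / ((1 - q) * (1 - q)))) ^ 3) (theta4 s)).
  apply (is_lim_seq_le (fun _ => exp (- (q / ((1 - q) * (1 - q)))) ^ 3)
           (fun N => jacobi_prod q (S N))).
  - intros; apply jacobi_prod_lower, Hq.
  - apply is_lim_seq_const.
  - apply jacobi_prod_lim, Hs.
Qed.

(** * Concavity *)

Definition concave (F : R -> R) := forall u1 u2 u3, u1 < u2 -> u2 < u3 ->
  (F u3 - F u2) * (u2 - u1) <= (F u2 - F u1) * (u3 - u2).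

Lemma concave_ext F G : (forall u, F u = G u) -> concave F -> concave G.
Proof. intros E HF u1 u2 u3 H1 H2. rewrite <- !E. auto. Qed.

Lemma concave_of_deriv_decr F F' : (forall u, derivable_pt_lim F u (F' u)) ->
  (forall u v, u < v -> F' v <= F' u) -> concave F.
Proof.
  intros HD Hdecr u1 u2 u3 H12 H23.
  destruct (MVT_cor2 F F' u1 u2 H12) as [c1 [E1 [Hc1 Hc1']]]; [intros; apply HD|].
  destruct (MVT_cor2 F F' u2 u3 H23) as [c2 [E2 [Hc2 Hc2']]]; [intros; apply HD|].
  rewrite E1, E2. pose proof (Hdecr c1 c2 ltac:(lra)).
  assert (0 < (u3 - u2) * (u2 - u1)) by nra. nra.
Qed.

Lemma concave_lim (Fn : nat -> R -> R) (F : R -> R) :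
  (forall u, is_lim_seq (fun n => Fn n u) (F u)) -> (forall n, concave (Fn n)) -> concave F.
Proof.
  intros Hcv HF u1 u2 u3 H1 H2.
  set (a := u3 - u2). set (b := u2 - u1).
  assert (Hv : is_lim_seq (fun n => (Fn n u2 - Fn n u1) * a - (Fn n u3 - Fn n u2) * b)
                          ((F u2 - F u1) * a - (F u3 - F u2) * b)).
  { apply is_lim_seq_minus'; apply is_lim_seq_mult';
      try apply is_lim_seq_const; apply is_lim_seq_minus'; apply Hcv. }
  assert (H : Rbar_le 0 ((F u2 - F u1) * a - (F u3 - F u2) * b)).
  { apply (is_lim_seq_le (fun _ => 0)
      (fun n => (Fn n u2 - Fn n u1) * a - (Fn n u3 - Fn n u2) * b));
      [|apply is_lim_seq_const|exact Hv].
    intros n. specialize (HF n u1 u2 u3 H1 H2). unfold a, b. lra. }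
  simpl in H. lra.
Qed.

Lemma concave_reflect F : concave F -> concave (fun u => F (- u)).
Proof.
  intros HF u1 u2 u3 H12 H23.
  specialize (HF (- u3) (- u2) (- u1) ltac:(lra) ltac:(lra)).
  replace (- - u2) with u2 in * by ring. nra.
Qed.

Lemma concave_chord_shrink F u1 v u2 : concave F -> u1 < v -> v < u2 ->
  (F u2 - F u1) * (v - u1) <= (F v - F u1) * (u2 - u1).
Proof. intros HF H1 H2. specialize (HF u1 v u2 H1 H2). nra. Qed.

Lemma concave_chord_le_deriv F u1 u2 d : concave F ->
  derivable_pt_lim F u1 d -> u1 < u2 -> F u2 - F u1 <= d * (u2 - u1).
Proof.
  intros HF HD H12.
  set (m := (F u2 - F u1) / (u2 - u1)).
  assert (Hm : F u2 - F u1 = m * (u2 - u1)) by (unfold m; field; lra).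
  rewrite Hm. apply Rmult_le_compat_r; [lra|].
  destruct (Rle_or_lt m d) as [|Hlt]; auto. exfalso.
  destruct (HD (m - d) ltac:(lra)) as [del Hdel]. pose proof (cond_pos del).
  set (h := Rmin (del / 2) ((u2 - u1) / 2)).
  assert (Hh : 0 < h) by (apply Rmin_pos; lra).
  assert (h <= del / 2) by apply Rmin_l. assert (h <= (u2 - u1) / 2) by apply Rmin_r.
  specialize (Hdel h ltac:(lra) ltac:(rewrite Rabs_right; lra)).
  apply Rabs_def2 in Hdel. destruct Hdel as [Hd _].
  assert (Hq : (F (u1 + h) - F u1) / h < m) by lra.
  pose proof (concave_chord_shrink F u1 (u1 + h) u2 HF ltac:(lra) ltac:(lra)) as C.
  rewrite Hm in C. replace (u1 + h - u1) with h in C by ring.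
  apply (Rmult_lt_compat_r h) in Hq; auto.
  replace ((F (u1 + h) - F u1) / h * h) with (F (u1 + h) - F u1) in Hq by (field; lra).
  assert (0 < h * (u2 - u1)) by nra. nra.
Qed.

Lemma concave_deriv_decr F u1 u2 d1 d2 : concave F ->
  derivable_pt_lim F u1 d1 -> derivable_pt_lim F u2 d2 -> u1 < u2 -> d2 <= d1.
Proof.
  intros HF D1 D2 H12.
  pose proof (concave_chord_le_deriv F u1 u2 d1 HF D1 H12) as C1.
  assert (D2' : derivable_pt_lim (fun u => F (- u)) (- u2) (- d2)).
  { replace (- d2) with (d2 * -1) by ring.
    apply (derivable_pt_lim_comp (fun u => - u) F).
    - apply is_derive_Reals. auto_derive; auto.
    - rewrite Ropp_involutive. exact D2. }
  pose proof (concave_chord_le_deriv _ (- u2) (- u1) (- d2) (concave_reflect F HF) D2'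
                ltac:(lra)) as C2.
  cbv beta in C2. rewrite !Ropp_involutive in C2.
  assert (0 < u2 - u1) by lra. nra.
Qed.

Definition log_concave (F : R -> R) := (forall u, 0 < F u) /\ concave (fun u => ln (F u)).

Lemma log_concave_mul F G : log_concave F -> log_concave G -> log_concave (fun u => F u * G u).
Proof.
  intros [PF CF] [PG CG]. split; [intros; apply Rmult_lt_0_compat; auto|].
  intros u1 u2 u3 H1 H2. rewrite !ln_mult by auto.
  specialize (CF u1 u2 u3 H1 H2). specialize (CG u1 u2 u3 H1 H2). lra.
Qed.

Lemma log_concave_prodR (F : nat -> R -> R) n :
  (forall j, log_concave (F j)) -> log_concave (fun u => prodR (fun j => F j u) n).
Proof.
  intros HF. induction n as [|n IH]; simpl.
  - split; [intros; lra|]. intros u1 u2 u3 _ _. rewrite ln_1. lra.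
  - apply (log_concave_mul (fun u => prodR (fun j => F j u) n) (F n)); auto.
Qed.

Lemma log_concave_lim (Fn : nat -> R -> R) (F : R -> R) :
  (forall n, log_concave (Fn n)) -> (forall u, is_lim_seq (fun n => Fn n u) (F u)) ->
  (forall u, 0 < F u) -> log_concave F.
Proof.
  intros HF Hcv HP. split; auto.
  apply (concave_lim (fun n u => ln (Fn n u))); [|intros n; apply HF].
  intros u. apply is_lim_seq_continuous; auto.
  apply derivable_continuous_pt. exists (/ F u). apply derivable_pt_lim_ln, HP.
Qed.

(* [gfun y = y / (e^y - 1)]; written so that it is the derivative of [ln (1 - e^(-c e^u))] at [y = c e^u]. *)
Definition gfun (y : R) := y * exp (- y) / (1 - exp (- y)).

Lemma gfun_alt y : 0 < y -> gfun y = y / (exp y - 1).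
Proof.
  intros Hy. unfold gfun. rewrite exp_Ropp.
  assert (1 < exp y) by (pose proof (exp_ineq1 y ltac:(lra)); lra).
  field. split; lra.
Qed.

Lemma gfun_decr y1 y2 : 0 < y1 < y2 -> gfun y2 < gfun y1.
Proof.
  intros [H1 H12]. rewrite !gfun_alt by lra.
  set (A := exp y1). set (d := y2 - y1). set (D := exp d).
  assert (HB : exp y2 = A * D) by (unfold A, D, d; rewrite <- exp_plus; f_equal; ring).
  rewrite HB.
  assert (HD : 1 + d < D) by (apply exp_ineq1; unfold d; lra).
  assert (HA1 : 1 < A) by (pose proof (exp_ineq1 y1 ltac:(lra)); unfold A; lra).
  (* [A (1 - y1) < 1] is [e^(-y1) > 1 - y1]. *)
  assert (HA : A * (1 - y1) < 1).
  { pose proof (exp_ineq1 (- y1) ltac:(lra)) as E.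
    assert (exp (- y1) * A = 1)
      by (unfold A; rewrite <- exp_plus, Rplus_opp_l; apply exp_0).
    pose proof (exp_pos y1). nra. }
  assert (Hd : 0 < d) by (unfold d; lra).
  assert (HAD : 1 < A * D) by nra.
  apply (Rmult_lt_reg_r ((A * D - 1) * (A - 1))). nra.
  replace (y2 / (A * D - 1) * ((A * D - 1) * (A - 1))) with (y2 * (A - 1)) by (field; lra).
  replace (y1 / (A - 1) * ((A * D - 1) * (A - 1))) with (y1 * (A * D - 1)) by (field; lra).
  replace y2 with (y1 + d) by (unfold d; ring).
  assert (0 < y1 * A) by nra.
  assert (y1 * A * d < y1 * A * (D - 1)) by (apply Rmult_lt_compat_l; lra).
  nra.
Qed.

Definition nome_factor (m : nat) (u : R) := 1 - exp (- (PI * INR m * exp u)).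

Lemma nome_factor_pow m u : 1 - nome (exp u) ^ m = nome_factor m u.
Proof. unfold nome, nome_factor. rewrite exp_pow_INR. do 3 f_equal. ring. Qed.

Lemma nome_factor_pos m u : (0 < m)%nat -> 0 < nome_factor m u.
Proof.
  intros Hm. rewrite <- nome_factor_pow. apply one_minus_pow_pos; auto.
  apply nome_pos. apply nome_lt1, exp_pos.
Qed.

Lemma derivable_pt_lim_ln_nome_factor m u : (0 < m)%nat ->
  derivable_pt_lim (fun u => ln (nome_factor m u)) u (gfun (PI * INR m * exp u)).
Proof.
  intros Hm. pose proof (nome_factor_pos m u Hm). unfold nome_factor in *.
  apply is_derive_Reals. unfold gfun. auto_derive; [lra|]. field. lra.
Qed.

Lemma gfun_nome_decr m u v : (0 < m)%nat -> u < v ->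
  gfun (PI * INR m * exp v) < gfun (PI * INR m * exp u).
Proof.
  intros Hm H. apply gfun_decr.
  assert (0 < PI * INR m) by (apply Rmult_lt_0_compat; [apply PI_RGT_0| apply lt_0_INR; auto]).
  pose proof (exp_pos u). pose proof (exp_increasing _ _ H). split; nra.
Qed.

Lemma log_concave_nome_factor m : (0 < m)%nat -> log_concave (nome_factor m).
Proof.
  intros Hm. split; [intros; apply nome_factor_pos, Hm|].
  apply (concave_of_deriv_decr _ (fun u => gfun (PI * INR m * exp u))).
  - intros u. apply derivable_pt_lim_ln_nome_factor, Hm.
  - intros u v H. apply Rlt_le, gfun_nome_decr; auto.
Qed.

Definition jacobi_tail N u :=
  prodR (fun j => nome_factor (2 * S j) u) (S N)
  * (prodR (fun j => nome_factor (2 * j + 3) u) N * prodR (fun j => nome_factor (2 * j + 3) u) N).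

Lemma jacobi_prod_exp N u :
  jacobi_prod (nome (exp u)) (S N) = nome_factor 1 u ^ 2 * jacobi_tail N u.
Proof.
  set (q := nome (exp u)).
  unfold jacobi_prod, jacobi_tail, qpoch2, qpoch_odd.
  rewrite (prodR_shift (fun i => 1 - q ^ (2 * i + 1))).
  rewrite (prodR_ext (fun j => 1 - q ^ (2 * S j)) (fun j => nome_factor (2 * S j) u))
    by (intros; apply nome_factor_pow).
  rewrite (prodR_ext (fun i => 1 - q ^ (2 * S i + 1)) (fun j => nome_factor (2 * j + 3) u))
    by (intros; rewrite <- nome_factor_pow; replace (2 * S i + 1)%nat with (2 * i + 3)%nat
        by lia; reflexivity).
  rewrite <- nome_factor_pow. fold q. simpl (2 * 0 + 1)%nat. ring.
Qed.

Lemma log_concave_jacobi_tail N : log_concave (jacobi_tail N).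
Proof.
  apply log_concave_mul; [|apply log_concave_mul];
    apply (log_concave_prodR (fun j => nome_factor _ )); intros j;
    apply log_concave_nome_factor; lia.
Qed.

Definition theta4_reduced u := theta4 (exp u) / nome_factor 1 u ^ 2.

Lemma log_concave_theta4_reduced : log_concave theta4_reduced.
Proof.
  assert (Hf : forall u, 0 < nome_factor 1 u ^ 2) by (intros; apply pow_lt, nome_factor_pos; lia).
  apply (log_concave_lim jacobi_tail); [apply log_concave_jacobi_tail| |].
  - intros u. apply (is_lim_seq_ext (fun N => jacobi_prod (nome (exp u)) (S N) / nome_factor 1 u ^ 2)).
    { intros N. rewrite jacobi_prod_exp. pose proof (nome_factor_pos 1 u ltac:(lia)).
      field. lra. }
    apply is_lim_seq_div'; [apply jacobi_prod_lim, exp_pos|apply is_lim_seq_const|].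
    specialize (Hf u). lra.
  - intros u. apply Rdiv_lt_0_compat; auto. apply theta4_pos, exp_pos.
Qed.

Definition theta4_log_deriv s := s * theta4_deriv s / theta4 s.

Lemma derivable_pt_lim_ln_theta4_reduced u :
  derivable_pt_lim (fun u => ln (theta4 (exp u)) - 2 * ln (nome_factor 1 u)) u
    (theta4_log_deriv (exp u) - 2 * gfun (PI * INR 1 * exp u)).
Proof.
  pose proof (theta4_pos (exp u) (exp_pos u)) as Hpos.
  apply (derivable_pt_lim_minus (fun u => ln (theta4 (exp u)))
           (mult_real_fct 2 (fun u => ln (nome_factor 1 u)))).
  - replace (theta4_log_deriv (exp u)) with (/ theta4 (exp u) * (theta4_deriv (exp u) * exp u))
      by (unfold theta4_log_deriv; field; lra).
    apply (derivable_pt_lim_comp (fun u => theta4 (exp u)) ln).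
    + apply (derivable_pt_lim_comp exp theta4).
      * apply derivable_pt_lim_exp.
      * apply derivable_pt_lim_theta4, exp_pos.
    + apply derivable_pt_lim_ln, Hpos.
  - apply derivable_pt_lim_scal, derivable_pt_lim_ln_nome_factor. lia.
Qed.

Lemma theta4_log_deriv_exp_decr u v : u < v ->
  theta4_log_deriv (exp v) < theta4_log_deriv (exp u).
Proof.
  intros Huv.
  assert (Hc : concave (fun u => ln (theta4 (exp u)) - 2 * ln (nome_factor 1 u))).
  { apply (concave_ext (fun u => ln (theta4_reduced u))); [|apply log_concave_theta4_reduced].
    intros w. unfold theta4_reduced.
    pose proof (theta4_pos (exp w) (exp_pos w)). pose proof (nome_factor_pos 1 w ltac:(lia)).
    rewrite ln_div, ln_pow by (auto; apply pow_lt; auto). simpl INR. ring. }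
  pose proof (concave_deriv_decr _ _ _ _ _ Hc (derivable_pt_lim_ln_theta4_reduced u)
                (derivable_pt_lim_ln_theta4_reduced v) Huv).
  pose proof (gfun_nome_decr 1 u v ltac:(lia) Huv). lra.
Qed.

Theorem mainTheorem12 :
  exists theta4' : R -> R,
    (forall s, 0 < s -> derivable_pt_lim theta4 s (theta4' s)) /\
    (forall s t, 0 < s -> s < t ->
       t * (theta4' t / theta4 t) < s * (theta4' s / theta4 s)).
Proof.
  exists theta4_deriv. split; [exact derivable_pt_lim_theta4|].
  intros s t Hs Hst.
  pose proof (theta4_log_deriv_exp_decr (ln s) (ln t) (ln_increasing s t Hs Hst)) as D.
  rewrite !exp_ln in D by lra. unfold theta4_log_deriv in D.
  unfold Rdiv in *. rewrite <- !Rmult_assoc. exact D.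
Qed.
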